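(* For groups with topology $G_1,G_2$, the canonical epimorphism $k:F_M(G_1\sqcup G_2)\to\tau(G_1)\ast\tau(G_2)$, which sends each generator $g\in G_i$ to the element $g$ of the factor $\tau(G_i)$, is a topological quotient map.
   Context: A group with topology is a group with an arbitrary topology. $G_1\sqcup G_2$ is the topological disjoint union. $F_M(S)$ is the free (Markov) topological group on a space $S$. For a group with topology $G$, $\tau(G)$ is $G$ with the quotient topology with respect to the multiplication epimorphism $m_G:F_M(G)\to G$ sending each generator $g$ to $g$. For topological groups $H_1,H_2$, $H_1\ast H_2$ is the free topological product, i.e. the coproduct in the category of topological groups (underlying group the free product). *)

From Stdlib Require Import FunctionalExtensionality PropExtensionality.
Set Implicit Arguments.

Record topology (X : Type) := Topology {
  open : (X -> Prop) -> Prop;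
  open_full : open (fun _ => True);
  open_inter : forall U V, open U -> open V -> open (fun x => U x /\ V x);
  open_union : forall (Fam : (X -> Prop) -> Prop),
      (forall U, Fam U -> open U) -> open (fun x => exists U, Fam U /\ U x)
}.

Definition continuous {X Y : Type} (tX : topology X) (tY : topology Y)
  (f : X -> Y) : Prop :=
  forall V, open tY V -> open tX (fun x => V (f x)).

Definition is_quotient_map {X Y : Type} (tX : topology X) (tY : topology Y)
  (f : X -> Y) : Prop :=
  (forall y, exists x, f x = y) /\
  (forall V, open tY V <-> open tX (fun x => V (f x))).

Definition quotient_topology {X Y : Type} (tX : topology X) (f : X -> Y)
  : topology Y.
Proof.
  refine (@Topology Y (fun V => open tX (fun x => V (f x))) _ _ _).
  - exact (open_full tX).
  - intros U V HU HV. exact (open_inter tX _ _ HU HV).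
  - intros Fam HFam.
    pose (Fam' := fun W : X -> Prop =>
                    exists U, Fam U /\ W = (fun x => U (f x))).
    assert (H := open_union tX Fam').
    assert (E : (fun x => exists W, Fam' W /\ W x)
               = (fun x => exists U, Fam U /\ U (f x))).
    { apply functional_extensionality.
      intro x. apply propositional_extensionality.
      split.
      - intros [W [[U [HU ->]] HW]]. exists U. split; assumption.
      - intros [U [HU HUx]]. exists (fun x => U (f x)). split; [|exact HUx].
        exists U. split; [exact HU|reflexivity]. }
    rewrite <- E. apply H.
    intros W [U [HU ->]]. exact (HFam U HU).
Defined.

Definition sum_topology {X Y : Type} (tX : topology X) (tY : topology Y)
  : topology (X + Y).
Proof.
  refine (@Topology (X + Y)
            (fun W => open tX (fun x => W (inl x)) /\ open tY (fun y => W (inr y)))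
            _ _ _).
  - split; apply open_full.
  - intros U V [HU1 HU2] [HV1 HV2]. split; apply open_inter; assumption.
  - intros Fam HFam. split.
    + pose (Fam' := fun W : X -> Prop =>
                      exists U, Fam U /\ W = (fun x => U (inl x))).
      assert (E : (fun x => exists W, Fam' W /\ W x)
                 = (fun x => exists U, Fam U /\ U (inl x))).
      { apply functional_extensionality.
        intro x. apply propositional_extensionality.
        split.
        - intros [W [[U [HU ->]] HW]]. exists U. split; assumption.
        - intros [U [HU HUx]]. exists (fun x => U (inl x)). split; [|exact HUx].
          exists U. split; [exact HU|reflexivity]. }
      simpl. rewrite <- E. apply open_union.
      intros W [U [HU ->]]. exact (proj1 (HFam U HU)).
    + pose (Fam' := fun W : Y -> Prop =>
                      exists U, Fam U /\ W = (fun y => U (inr y))).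
      assert (E : (fun y => exists W, Fam' W /\ W y)
                 = (fun y => exists U, Fam U /\ U (inr y))).
      { apply functional_extensionality.
        intro x. apply propositional_extensionality.
        split.
        - intros [W [[U [HU ->]] HW]]. exists U. split; assumption.
        - intros [U [HU HUx]]. exists (fun y => U (inr y)). split; [|exact HUx].
          exists U. split; [exact HU|reflexivity]. }
      simpl. rewrite <- E. apply open_union.
      intros W [U [HU ->]]. exact (proj2 (HFam U HU)).
Defined.

Record group (X : Type) := Group {
  gmul : X -> X -> X;
  gone : X;
  ginv : X -> X;
  gmulA : forall x y z, gmul x (gmul y z) = gmul (gmul x y) z;
  gmul1g : forall x, gmul gone x = x;
  gmulVg : forall x, gmul (ginv x) x = gone
}.

Definition is_hom {X Y : Type} (gX : group X) (gY : group Y) (f : X -> Y)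
  : Prop := forall x y, f (gmul gX x y) = gmul gY (f x) (f y).

(** A group with topology is just a group together with a topology
    (no compatibility).  A topological group: multiplication continuous
    for the product topology (unfolded) and inversion continuous. *)
Definition is_topological_group {X : Type} (g : group X) (t : topology X)
  : Prop :=
  (forall W, open t W -> forall x y, W (gmul g x y) ->
     exists A B, open t A /\ open t B /\ A x /\ B y /\
       (forall a b, A a -> B b -> W (gmul g a b))) /\
  continuous t t (ginv g).

Definition is_free_topological_group {S F : Type} (tS : topology S)
  (gF : group F) (tF : topology F) (i : S -> F) : Prop :=
  is_topological_group gF tF /\ continuous tS tF i /\
  forall (H : Type) (gH : group H) (tH : topology H),
    is_topological_group gH tH ->
    forall f : S -> H, continuous tS tH f ->
    exists h : F -> H,
      is_hom gF gH h /\ continuous tF tH h /\ (forall s, h (i s) = f s) /\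
      (forall h' : F -> H, is_hom gF gH h' -> continuous tF tH h' ->
         (forall s, h' (i s) = f s) -> forall x, h' x = h x).

Definition is_free_topological_product {A B P : Type}
  (gA : group A) (tA : topology A) (gB : group B) (tB : topology B)
  (gP : group P) (tP : topology P) (jA : A -> P) (jB : B -> P) : Prop :=
  is_topological_group gP tP /\
  is_hom gA gP jA /\ continuous tA tP jA /\
  is_hom gB gP jB /\ continuous tB tP jB /\
  forall (H : Type) (gH : group H) (tH : topology H),
    is_topological_group gH tH ->
    forall (fA : A -> H) (fB : B -> H),
      is_hom gA gH fA -> continuous tA tH fA ->
      is_hom gB gH fB -> continuous tB tH fB ->
      exists h : P -> H,
        is_hom gP gH h /\ continuous tP tH h /\
        (forall a, h (jA a) = fA a) /\ (forall b, h (jB b) = fB b) /\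
        (forall h' : P -> H, is_hom gP gH h' -> continuous tP tH h' ->
           (forall a, h' (jA a) = fA a) -> (forall b, h' (jB b) = fB b) ->
           forall x, h' x = h x).

(* The identity of the underlying group P of tau(G1) * tau(G2) is continuous
   from the free product topology tP to the quotient topology induced by k:
   the latter makes P a topological group (a quotient of F_M(G1 ⊔ G2) by a
   surjective homomorphism), and both factor embeddings are continuous into it,
   because j_n ∘ m_n factors through k as k ∘ F_M(inclusion).  The coproduct
   property then yields the continuity of the identity.  Conversely k is
   continuous, being the free extension of the continuous map G1 ⊔ G2 -> P. *)

From Stdlib Require Import Classical FunctionalExtensionality PropExtensionality
  ProofIrrelevance.

Lemma open_ext {X} (t : topology X) (U V : X -> Prop) :
  (forall x, U x <-> V x) -> open t U -> open t V.
Proof.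
  intros H HU. replace V with U; [exact HU|].
  apply functional_extensionality; intro x; apply propositional_extensionality, H.
Qed.

Lemma open_local {X} (t : topology X) (S : X -> Prop) :
  (forall x, S x -> exists A, open t A /\ A x /\ forall y, A y -> S y) -> open t S.
Proof.
  intros H.
  apply open_ext with (fun x => exists A, (open t A /\ forall y, A y -> S y) /\ A x).
  - intro x; split.
    + intros [A [[_ HA] Ax]]; auto.
    + intros Sx. destruct (H x Sx) as [A [HA [Ax HAS]]]. exists A; auto.
  - apply open_union. intros U [HU _]; exact HU.
Qed.

Lemma open_empty {X} (t : topology X) (U : X -> Prop) : (forall x, ~ U x) -> open t U.
Proof.
  intros H. apply open_ext with (fun x => exists W : X -> Prop, False /\ W x).
  - intro x; split; [intros [W [[] _]] | intros Hx; exfalso; exact (H x Hx)].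
  - apply open_union. intros _ [].
Qed.

Lemma open_all {X} (t : topology X) (U : X -> Prop) : (forall x, U x) -> open t U.
Proof.
  intros H. apply open_ext with (fun _ => True); [intro x; split; auto|].
  apply open_full.
Qed.

Lemma continuous_ext {X Y} (tX : topology X) (tY : topology Y) (f g : X -> Y) :
  (forall x, f x = g x) -> continuous tX tY f -> continuous tX tY g.
Proof.
  intros E cf V HV. apply open_ext with (fun x => V (f x)); [|exact (cf V HV)].
  intro x; rewrite E; tauto.
Qed.

Lemma continuous_comp {X Y Z} (tX : topology X) (tY : topology Y) (tZ : topology Z)
  (f : X -> Y) (g : Y -> Z) :
  continuous tX tY f -> continuous tY tZ g -> continuous tX tZ (fun x => g (f x)).
Proof. intros cf cg V HV. exact (cf _ (cg V HV)). Qed.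

Lemma continuous_inl {X Y} (tX : topology X) (tY : topology Y) :
  continuous tX (sum_topology tX tY) inl.
Proof. intros V HV. exact (proj1 HV). Qed.

Lemma continuous_inr {X Y} (tX : topology X) (tY : topology Y) :
  continuous tY (sum_topology tX tY) inr.
Proof. intros V HV. exact (proj2 HV). Qed.

Lemma continuous_sum_case {X Y Z} (tX : topology X) (tY : topology Y) (tZ : topology Z)
  (f : X -> Z) (g : Y -> Z) :
  continuous tX tZ f -> continuous tY tZ g ->
  continuous (sum_topology tX tY) tZ (fun s => match s with inl x => f x | inr y => g y end).
Proof. intros cf cg V HV. split; [exact (cf V HV)|exact (cg V HV)]. Qed.

Lemma continuous_from_quotient {X Y Z} (tX : topology X) (tZ : topology Z)
  (m : X -> Y) (g : Y -> Z) :
  continuous (quotient_topology tX m) tZ g -> continuous tX tZ (fun x => g (m x)).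
Proof. intros cg V HV. exact (cg V HV). Qed.

Lemma continuous_from_quotient_section {S X Z} (tS : topology S) (tX : topology X)
  (tZ : topology Z) (i : S -> X) (m : X -> S) (g : S -> Z) :
  continuous tS tX i -> (forall s, m (i s) = s) ->
  continuous (quotient_topology tX m) tZ g -> continuous tS tZ g.
Proof.
  intros ci mi cg. apply continuous_ext with (fun s => g (m (i s))).
  - intro s; rewrite mi; reflexivity.
  - exact (continuous_comp _ _ _ _ _ ci (continuous_from_quotient _ _ _ _ cg)).
Qed.

Lemma continuous_quotient_factor {X1 Y1 X2 Y2} (t1 : topology X1) (t2 : topology X2)
  (m1 : X1 -> Y1) (m2 : X2 -> Y2) (f : X1 -> X2) (g : Y1 -> Y2) :
  continuous t1 t2 f -> (forall x, g (m1 x) = m2 (f x)) ->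
  continuous (quotient_topology t1 m1) (quotient_topology t2 m2) g.
Proof.
  intros cf E V HV. simpl in HV |- *.
  apply open_ext with (fun x => V (m2 (f x))); [intro x; rewrite E; tauto|].
  exact (cf _ HV).
Qed.

Lemma quotient_map_intro {X Y} (tX : topology X) (tY : topology Y) (f : X -> Y) :
  (forall y, exists x, f x = y) -> continuous tX tY f ->
  continuous tY (quotient_topology tX f) (fun y => y) -> is_quotient_map tX tY f.
Proof.
  intros sf cf cid. split; [exact sf|]. intro V; split.
  - exact (cf V).
  - exact (cid V).
Qed.

(* Every map into an indiscrete group is continuous, so the universal
   properties below also give uniqueness and existence of plain homomorphisms. *)
Definition indiscrete_topology (X : Type) : topology X.
Proof.
  refine (@Topology X (fun U => (forall x, U x) \/ (forall x, ~ U x)) _ _ _).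
  - left; auto.
  - intros U V [HU|HU] [HV|HV].
    + left; auto.
    + right; intros x [_ h]; exact (HV x h).
    + right; intros x [h _]; exact (HU x h).
    + right; intros x [h _]; exact (HU x h).
  - intros Fam HFam.
    destruct (classic (exists U, Fam U /\ exists x, U x)) as [[U [HU [x Hx]]]|N].
    + left. intro y. exists U. split; [exact HU|].
      destruct (HFam U HU) as [h|h]; [apply h|exfalso; exact (h x Hx)].
    + right. intros y [U [HU Hy]]. apply N. eauto.
Defined.

Lemma continuous_to_indiscrete {X Y} (tX : topology X) (f : X -> Y) :
  continuous tX (indiscrete_topology Y) f.
Proof.
  intros V [HV|HV].
  - apply open_all. intro; apply HV.
  - apply open_empty. intro; apply HV.
Qed.

Lemma indiscrete_topological_group {X} (g : group X) :
  is_topological_group g (indiscrete_topology X).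
Proof.
  split; [|apply continuous_to_indiscrete].
  intros W [HW|HW] x y Wxy.
  - exists (fun _ => True), (fun _ => True). simpl. repeat split; auto.
  - exfalso; exact (HW _ Wxy).
Qed.

Lemma mulgV {X} (g : group X) x : gmul g x (ginv g x) = gone g.
Proof.
  rewrite <- (gmul1g g (gmul g x (ginv g x))).
  rewrite <- (gmulVg g (ginv g x)) at 1.
  rewrite <- gmulA, (gmulA g (ginv g x) x), gmulVg, gmul1g, gmulVg.
  reflexivity.
Qed.

Lemma mulg1 {X} (g : group X) x : gmul g x (gone g) = x.
Proof. rewrite <- (gmulVg g x), gmulA, mulgV, gmul1g. reflexivity. Qed.

Lemma hom1 {X Y} {gX : group X} {gY : group Y} {f : X -> Y} :
  is_hom gX gY f -> f (gone gX) = gone gY.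
Proof.
  intros hf. assert (E : f (gone gX) = gmul gY (f (gone gX)) (f (gone gX))).
  { rewrite <- hf, gmul1g. reflexivity. }
  rewrite <- (gmulVg gY (f (gone gX))). rewrite E at 3.
  rewrite gmulA, gmulVg, gmul1g. reflexivity.
Qed.

Lemma homV {X Y} {gX : group X} {gY : group Y} {f : X -> Y} :
  is_hom gX gY f -> forall x, f (ginv gX x) = ginv gY (f x).
Proof.
  intros hf x. rewrite <- (mulg1 gY (f (ginv gX x))).
  rewrite <- (mulgV gY (f x)), gmulA, <- hf, gmulVg, (hom1 hf), gmul1g.
  reflexivity.
Qed.

Lemma hom_comp {X Y Z} {gX : group X} {gY : group Y} {gZ : group Z}
  {f : X -> Y} {h : Y -> Z} :
  is_hom gX gY f -> is_hom gY gZ h -> is_hom gX gZ (fun x => h (f x)).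
Proof. intros hf hh x y. rewrite hf, hh. reflexivity. Qed.

Lemma hom_id {X} (g : group X) : is_hom g g (fun x => x).
Proof. intros x y; reflexivity. Qed.

Section FreeTopologicalGroup.
Context {S F : Type} {tS : topology S} {gF : group F} {tF : topology F} {i : S -> F}.
Hypothesis hF : is_free_topological_group tS gF tF i.

Lemma free_hom_unique {H} (gH : group H) (f1 f2 : F -> H) :
  is_hom gF gH f1 -> is_hom gF gH f2 ->
  (forall s, f1 (i s) = f2 (i s)) -> forall x, f1 x = f2 x.
Proof.
  intros h1 h2 E x. destruct hF as [_ [_ U]].
  destruct (U H gH (indiscrete_topology H) (indiscrete_topological_group gH)
              (fun s => f1 (i s)) (continuous_to_indiscrete _ _))
    as [h [_ [_ [_ Hu]]]].
  rewrite (Hu f1 h1 (continuous_to_indiscrete _ _) (fun s => eq_refl)).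
  rewrite (Hu f2 h2 (continuous_to_indiscrete _ _) (fun s => eq_sym (E s))).
  reflexivity.
Qed.

Lemma free_hom_continuous {H} (gH : group H) (tH : topology H) (f : S -> H) (h : F -> H) :
  is_topological_group gH tH -> continuous tS tH f ->
  is_hom gF gH h -> (forall s, h (i s) = f s) -> continuous tF tH h.
Proof.
  intros tgH cf hh Eh. destruct hF as [_ [_ U]].
  destruct (U H gH tH tgH f cf) as [h' [hh' [ch' [Eh' _]]]].
  apply continuous_ext with h'; [|exact ch'].
  apply (free_hom_unique gH); [exact hh'|exact hh|].
  intro s; rewrite Eh, Eh'; reflexivity.
Qed.

(* [j ∘ m] and [k ∘ F_M(e)] agree on generators, hence everywhere. *)
Lemma free_factor_continuous {E P : Type} (gS : group S) (gE : group E) (tE : topology E)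
  (gP : group P) (m : F -> S) (e : S -> E) (k : E -> P) (j : S -> P) :
  is_topological_group gE tE -> continuous tS tE e ->
  is_hom gF gS m -> (forall s, m (i s) = s) ->
  is_hom gE gP k -> is_hom gS gP j -> (forall s, k (e s) = j s) ->
  continuous (quotient_topology tF m) (quotient_topology tE k) j.
Proof.
  intros tgE ce hm mi hk hj ke. destruct hF as [_ [_ U]].
  destruct (U E gE tE tgE e ce) as [io [hio [cio [Eio _]]]].
  apply (continuous_quotient_factor _ _ _ _ io); [exact cio|].
  apply (free_hom_unique gP); [exact (hom_comp hm hj)|exact (hom_comp hio hk)|].
  intro s; rewrite mi, Eio, ke; reflexivity.
Qed.

End FreeTopologicalGroup.

Section FreeTopologicalProduct.
Context {A B P : Type} {gA : group A} {tA : topology A} {gB : group B} {tB : topology B}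
  {gP : group P} {tP : topology P} {jA : A -> P} {jB : B -> P}.
Hypothesis hP : is_free_topological_product gA tA gB tB gP tP jA jB.

Lemma free_product_hom_unique {H} (gH : group H) (f1 f2 : P -> H) :
  is_hom gP gH f1 -> is_hom gP gH f2 ->
  (forall a, f1 (jA a) = f2 (jA a)) -> (forall b, f1 (jB b) = f2 (jB b)) ->
  forall x, f1 x = f2 x.
Proof.
  intros h1 h2 EA EB x. destruct hP as [_ [hA [_ [hB [_ U]]]]].
  destruct (U H gH (indiscrete_topology H) (indiscrete_topological_group gH)
              (fun a => f1 (jA a)) (fun b => f1 (jB b)) (hom_comp hA h1)
              (continuous_to_indiscrete _ _) (hom_comp hB h1)
              (continuous_to_indiscrete _ _))
    as [h [_ [_ [_ [_ Hu]]]]].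
  rewrite (Hu f1 h1 (continuous_to_indiscrete _ _) (fun _ => eq_refl) (fun _ => eq_refl)).
  rewrite (Hu f2 h2 (continuous_to_indiscrete _ _)
             (fun a => eq_sym (EA a)) (fun b => eq_sym (EB b))).
  reflexivity.
Qed.

Lemma free_product_topology_finest (tQ : topology P) :
  is_topological_group gP tQ -> continuous tA tQ jA -> continuous tB tQ jB ->
  continuous tP tQ (fun p => p).
Proof.
  intros tgQ cA cB. pose proof hP as [_ [hA [_ [hB [_ U]]]]].
  destruct (U P gP tQ tgQ jA jB hA cA hB cB) as [h [hh [ch [EA [EB _]]]]].
  apply continuous_ext with h; [|exact ch].
  apply (free_product_hom_unique gP); [exact hh|exact (hom_id gP)|exact EA|exact EB].
Qed.

Section ImageSubgroup.
Context {F : Type} {gF : group F} {k : F -> P}.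
Hypothesis hk : is_hom gF gP k.

Definition image_of := {p : P | exists x, k x = p}.

Lemma image_of_eq (a b : image_of) : proj1_sig a = proj1_sig b -> a = b.
Proof. apply eq_sig_hprop; intros; apply proof_irrelevance. Qed.

Definition image_mul (a b : image_of) : image_of.
Proof.
  refine (exist _ (gmul gP (proj1_sig a) (proj1_sig b)) _).
  destruct a as [a [x <-]], b as [b [y <-]]. exists (gmul gF x y). apply hk.
Defined.

Definition image_one : image_of.
Proof. refine (exist _ (gone gP) _). exists (gone gF). exact (hom1 hk). Defined.

Definition image_inv (a : image_of) : image_of.
Proof.
  refine (exist _ (ginv gP (proj1_sig a)) _).
  destruct a as [a [x <-]]. exists (ginv gF x). exact (homV hk x).
Defined.

Definition image_group : group image_of.
Proof.
  refine (@Group _ image_mul image_one image_inv _ _ _);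
    intros; apply image_of_eq; simpl.
  - apply gmulA.
  - apply gmul1g.
  - apply gmulVg.
Defined.

(* The coproduct property applied to the image subgroup (with the indiscrete
   topology) yields a retraction P -> image of k. *)
Lemma free_product_hom_surjective :
  (forall a, exists x, k x = jA a) -> (forall b, exists x, k x = jB b) ->
  forall p, exists x, k x = p.
Proof.
  intros sA sB p. pose proof hP as [_ [hA [_ [hB [_ U]]]]].
  destruct (U _ image_group (indiscrete_topology _)
              (indiscrete_topological_group image_group)
              (fun a => exist _ (jA a) (sA a)) (fun b => exist _ (jB b) (sB b)))
    as [h [hh [_ [EA [EB _]]]]].
  - intros a b. apply image_of_eq. apply hA.
  - apply continuous_to_indiscrete.
  - intros a b. apply image_of_eq. apply hB.
  - apply continuous_to_indiscrete.
  - assert (E : proj1_sig (h p) = p).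
    { apply (free_product_hom_unique gP (fun p => proj1_sig (h p)) (fun p => p)).
      + intros x y. rewrite hh. reflexivity.
      + exact (hom_id gP).
      + intro a. rewrite EA. reflexivity.
      + intro b. rewrite EB. reflexivity. }
    destruct (h p) as [q [x Hx]]. simpl in E. exists x. congruence.
Qed.

End ImageSubgroup.

End FreeTopologicalProduct.

Section QuotientTopologicalGroup.
Context {F P : Type} {gF : group F} {tF : topology F} {gP : group P} {k : F -> P}.
Hypotheses (tgF : is_topological_group gF tF) (hk : is_hom gF gP k)
  (sk : forall p, exists x, k x = p).

Lemma open_right_translate (W : F -> Prop) (c : F) :
  open tF W -> open tF (fun x => W (gmul gF x c)).
Proof.
  intros HW. apply open_local. intros x Wx.
  destruct (proj1 tgF W HW x c Wx) as [A [B [HA [HB [Ax [Bc HAB]]]]]].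
  exists A. repeat split; auto.
Qed.

(* [z] lies in the saturation of [A] via the open neighbourhood [A * z^-1 a]
   of [z], where [a] is a point of [A] with [k a = k z]. *)
Lemma open_saturation (A : F -> Prop) :
  open tF A -> open tF (fun z => exists a, A a /\ k a = k z).
Proof.
  intros HA. apply open_local. intros z [a [Aa Eaz]].
  exists (fun w => A (gmul gF w (gmul gF (ginv gF z) a))).
  split; [exact (open_right_translate _ _ HA)|split].
  - rewrite gmulA, mulgV, gmul1g. exact Aa.
  - intros w Aw. exists (gmul gF w (gmul gF (ginv gF z) a)). split; [exact Aw|].
    rewrite hk, (hk (ginv gF z)), Eaz, <- (hk (ginv gF z) z), gmulVg, <- hk, mulg1.
    reflexivity.
Qed.

Lemma quotient_topological_group : is_topological_group gP (quotient_topology tF k).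
Proof.
  split.
  - intros W HW p q Wpq. simpl in HW |- *.
    destruct (sk p) as [x <-]. destruct (sk q) as [y <-].
    rewrite <- hk in Wpq.
    destruct (proj1 tgF _ HW x y Wpq) as [A [B [HA [HB [Ax [By HAB]]]]]].
    exists (fun p => exists a, A a /\ k a = p), (fun p => exists b, B b /\ k b = p).
    simpl. split; [exact (open_saturation A HA)|].
    split; [exact (open_saturation B HB)|].
    split; [eauto|]. split; [eauto|].
    intros a' b' [a [Aa <-]] [b [Bb <-]]. rewrite <- hk. apply HAB; assumption.
  - intros W HW. simpl in HW |- *.
    apply open_ext with (fun x => W (k (ginv gF x))); [intro x; rewrite (homV hk); tauto|].
    exact (proj2 tgF _ HW).
Qed.

End QuotientTopologicalGroup.

Theorem proposition3p10
  (* groups with topology G1, G2 *)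
  (G1 : Type) (g1 : group G1) (t1 : topology G1)
  (G2 : Type) (g2 : group G2) (t2 : topology G2)
  (* F_M(G1) with generators i1 and the multiplication epimorphism m1 *)
  (F1 : Type) (gF1 : group F1) (tF1 : topology F1) (i1 : G1 -> F1)
  (hF1 : is_free_topological_group t1 gF1 tF1 i1)
  (m1 : F1 -> G1) (hm1 : is_hom gF1 g1 m1) (hm1i : forall g, m1 (i1 g) = g)
  (* F_M(G2) with generators i2 and the multiplication epimorphism m2 *)
  (F2 : Type) (gF2 : group F2) (tF2 : topology F2) (i2 : G2 -> F2)
  (hF2 : is_free_topological_group t2 gF2 tF2 i2)
  (m2 : F2 -> G2) (hm2 : is_hom gF2 g2 m2) (hm2i : forall g, m2 (i2 g) = g)
  (* F_M(G1 ⊔ G2) *)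
  (F : Type) (gF : group F) (tF : topology F) (i : G1 + G2 -> F)
  (hF : is_free_topological_group (sum_topology t1 t2) gF tF i)
  (* tau(G1) * tau(G2), tau(Gk) = Gk with the quotient topology w.r.t. mk *)
  (P : Type) (gP : group P) (tP : topology P) (j1 : G1 -> P) (j2 : G2 -> P)
  (hP : is_free_topological_product g1 (quotient_topology tF1 m1)
          g2 (quotient_topology tF2 m2) gP tP j1 j2)
  (* the canonical epimorphism k *)
  (k : F -> P) (hk : is_hom gF gP k)
  (hk1 : forall g, k (i (inl g)) = j1 g)
  (hk2 : forall g, k (i (inr g)) = j2 g) :
  is_quotient_map tF tP k.
Proof.
  pose proof hP as [tgP [hj1 [cj1 [hj2 [cj2 _]]]]].
  pose proof hF as [tgF [ci _]].
  pose proof hF1 as [_ [ci1 _]]. pose proof hF2 as [_ [ci2 _]].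
  assert (sk : forall p, exists x, k x = p).
  { apply (free_product_hom_surjective hP hk).
    - intro a. exists (i (inl a)). apply hk1.
    - intro b. exists (i (inr b)). apply hk2. }
  apply quotient_map_intro; [exact sk| |].
  - apply (free_hom_continuous hF gP tP
             (fun s => match s with inl a => j1 a | inr b => j2 b end) k tgP);
      [|exact hk|intros [a|b]; [apply hk1|apply hk2]].
    apply continuous_sum_case.
    + exact (continuous_from_quotient_section _ _ _ _ _ _ ci1 hm1i cj1).
    + exact (continuous_from_quotient_section _ _ _ _ _ _ ci2 hm2i cj2).
  - apply (free_product_topology_finest hP).
    + exact (quotient_topological_group tgF hk sk).
    + apply (free_factor_continuous hF1 g1 gF tF gP m1
               (fun a => i (inl a)) k j1 tgF); auto.
      exact (continuous_comp _ _ _ _ _ (continuous_inl t1 t2) ci).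
    + apply (free_factor_continuous hF2 g2 gF tF gP m2
               (fun b => i (inr b)) k j2 tgF); auto.
      exact (continuous_comp _ _ _ _ _ (continuous_inr t1 t2) ci).
Qed.
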